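(* Let $\Gamma$ be a finite simplicial graph with vertex set $V=\{a_0,\ldots,a_{n-1}\}$ ($n\ge1$), let $M$ be a positive integer, $B(M)=\{w\in A(\Gamma):\|w\|\le M\}$, and let $\sigma$ be defined on words as in the context. Then: (1) $\sigma$ gives a well-defined map $B(M)\to A(\Gamma)$; that is, if two words $s_1^{e_1}\cdots s_\ell^{e_\ell}$ and $t_1^{d_1}\cdots t_\ell^{d_\ell}$ of length $\ell=\|w\|$ represent the same element $w\in B(M)$, then their images under $\sigma$ are equal in $A(\Gamma)$. (2) If $s_1^{e_1}\cdots s_\ell^{e_\ell}$ is a canonical expression for $w\in B(M)$ and $\sigma(w)=s_1^{N_1}\cdots s_\ell^{N_\ell}$ as in the context, then $(s_1^{N_1},\ldots,s_\ell^{N_\ell})$ is a subsequence of the sequence $(u_i)_{i\ge0}$, i.e. there are indices $j_1<j_2<\cdots<j_\ell$ with $s_k^{N_k}=u_{j_k}$ for all $k$.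
   Context: $A(\Gamma)=\langle V\mid[a,b]=1\text{ for }\{a,b\}\in E(\Gamma)\rangle$; $\|w\|$ is the word length with respect to $V$. For a word $s_1^{e_1}\cdots s_\ell^{e_\ell}$ ($s_i\in V$, $e_i\in\{\pm1\}$, $\ell=\|w\|$) representing $w$, its right-counting vector $(f_1,\ldots,f_\ell)$ has $f_i=\min\|y\|$ over $y\in A(\Gamma)$ such that $s_i^{e_i}\cdots s_\ell^{e_\ell}=x\,s_i^{e_i}\,y$ for some $x\in\langle\mathrm{lk}_\Gamma(s_i)\rangle$ ($\mathrm{lk}_\Gamma(s)$ = vertices adjacent to $s$). The word is a canonical expression if (A) $f_1\ge\cdots\ge f_\ell$ and (B) whenever $f_i=f_j$, $i<j$, $s_i=a_p$, $s_j=a_q$, then $p<q$ and $[a_p,a_q]=1$. Define $N_i=\frac{3e_i-1}{2}\cdot 4^{M-1-f_i}$ and $\sigma(s_1^{e_1}\cdots s_\ell^{e_\ell})=s_1^{N_1}s_2^{N_2}\cdots s_\ell^{N_\ell}\in A(\Gamma)$. The sequence $(u_i)$: for $i\ge0$, $0\le j<2n$, $u_{2ni+j}=a_{\lfloor j/2\rfloor}^{\,r_{i,j}}$ with $r_{i,j}=(-2)^{2i+j-2\lfloor j/2\rfloor}$ (so $u_0=a_0,u_1=a_0^{-2},u_2=a_1,u_3=a_1^{-2},\ldots,u_{2n}=a_0^4,u_{2n+1}=a_0^{-8},\ldots$). *)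

From mathcomp Require Import all_boot all_order all_algebra.
Set Implicit Arguments. Unset Strict Implicit. Unset Printing Implicit Defensive.
Import GRing.Theory Num.Theory.

(* A letter s^e : vertex s, sign e (true = +1, false = -1). *)
Definition letter (n : nat) := ('I_n * bool)%type.
Definition word (n : nat) := seq (letter n).
Definition linv n (x : letter n) : letter n := (x.1, ~~ x.2).

(* Equality in A(Gamma) = <V | [a,b]=1, {a,b} in E(Gamma)>: the congruence on
   words generated by free cancellation and commutation of adjacent generators. *)
Inductive raag_eq (n : nat) (e : rel 'I_n) : word n -> word n -> Prop :=
| re_refl s : raag_eq e s s
| re_sym s t : raag_eq e s t -> raag_eq e t s
| re_trans s t r : raag_eq e s t -> raag_eq e t r -> raag_eq e s r
| re_free u w x : raag_eq e (u ++ x :: linv x :: w) (u ++ w)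
| re_comm u w x y : e x.1 y.1 -> raag_eq e (u ++ x :: y :: w) (u ++ y :: x :: w).

Definition geodesic n (e : rel 'I_n) (s : word n) : Prop :=
  forall t, raag_eq e s t -> (size s <= size t)%N.

Definition is_min (P : nat -> Prop) (m : nat) : Prop :=
  P m /\ forall k, P k -> (m <= k)%N.

(* The set over which f_i (0-indexed i) is minimised: possible values ||y||,
   i.e. lengths of words y with  s_i^{e_i}...s_l^{e_l} = x s_i^{e_i} y,
   x in <lk(s_i)> (x a word in letters from lk(s_i)). *)
Definition rc_cand n (e : rel 'I_n) (s : word n) (i : nat) (x0 : letter n)
  (k : nat) : Prop :=
  exists (x y : word n),
    all (fun l : letter n => e (nth x0 s i).1 l.1) x /\ size y = k /\
    raag_eq e (drop i s) (x ++ nth x0 s i :: y).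

Definition rcv n (e : rel 'I_n) (s : word n) (f : seq nat) : Prop :=
  size f = size s /\
  forall x0 i, (i < size s)%N -> is_min (rc_cand e s i x0) (nth 0%N f i).

Definition commutator_trivial n (e : rel 'I_n) (a b : 'I_n) : Prop :=
  raag_eq e [:: (a, true); (b, true); (a, false); (b, false)] [::].

Definition canonical n (e : rel 'I_n) (s : word n) (f : seq nat) : Prop :=
  rcv e s f /\
  (forall i j, (i <= j < size s)%N -> (nth 0%N f j <= nth 0%N f i)%N) /\
  (forall x0 i j, (i < j < size s)%N -> nth 0%N f i = nth 0%N f j ->
     ((nth x0 s i).1 < (nth x0 s j).1)%N /\
     commutator_trivial e (nth x0 s i).1 (nth x0 s j).1).

(* N_k = ((3 e_k - 1)/2) * 4^(M-1-f_k)  (e_k = +1 -> 4^.., e_k = -1 -> -2*4^..) *)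
Definition Nexp (M : nat) (b : bool) (fk : nat) : int :=
  ((if b then 1 else -2) * (4 ^+ (M - 1 - fk)%N))%R.

(* the sequence of syllables (s_k, N_k), vertices as their index p of a_p *)
Definition sylls n (M : nat) (s : word n) (f : seq nat) : seq (nat * int) :=
  [seq (nat_of_ord p.1.1, Nexp M p.1.2 p.2) | p <- zip s f].

Definition pw n (a : 'I_n) (z : int) : word n := nseq `|z|%N (a, (0 <= z)%R).

Definition sigma n (M : nat) (s : word n) (f : seq nat) : word n :=
  flatten [seq pw p.1.1 (Nexp M p.1.2 p.2) | p <- zip s f].

(* u_{2ni+j} = a_{floor(j/2)}^{(-2)^(2i+j-2 floor(j/2))}, 0 <= j < 2n;
   returned as (index of the vertex, exponent) *)
Definition u (n : nat) (m : nat) : nat * int :=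
  let i := (m %/ (2 * n))%N in
  let j := (m %% (2 * n))%N in
  (j %/ 2, ((-2) ^+ (2 * i + j - 2 * (j %/ 2)))%R)%N.

(* Two geodesic words for the same element of A(Gamma) differ by a sequence
   of swaps of adjacent commuting letters.  To see this, read a word from right
   to left, putting each letter x in front of the word built so far, unless x
   can cancel against the first x^-1 that it reaches through letters of its
   link.  The resulting normal form is invariant, up to such swaps, under the
   defining relations, and it fixes geodesic (hence reduced) words.
   A swap of adjacent commuting letters a b leaves the sets minimised in the
   definition of the right-counting vector unchanged, up to exchanging the two
   positions; so sigma only exchanges the commuting syllables a^N and b^N'.
   For (2), the syllable a_p^(N_k) is u_j for j = 2n(M-1-f_k) + 2p + [e_k = -1],
   and conditions (A), (B) make these indices increase. *)
From mathcomp Require Import all_boot all_order all_algebra.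
From mathcomp Require Import zify.
From Stdlib Require Import Classical Wf_nat.
Set Implicit Arguments. Unset Strict Implicit. Unset Printing Implicit Defensive.
Import GRing.Theory.

Lemma cat_eq_cat_cons T (p q p' q' : seq T) (y : T) :
  p ++ q = p' ++ y :: q' ->
  (exists m, p = p' ++ y :: m /\ q' = m ++ q) \/
  (exists m, p' = p ++ m /\ q = m ++ y :: q').
Proof.
elim: p p' => [|a p IH] p' /=; first by move=> ->; right; exists p'.
case: p' => [|b p'] /= [<- E]; first by left; exists p; rewrite E.
case: (IH _ E) => [[m [-> ->]]|[m [-> ->]]]; [left | right]; by exists m.
Qed.

Lemma cat_cons_eq_cat_cons T (p1 q1 p2 q2 : seq T) (a b : T) :
  p1 ++ a :: q1 = p2 ++ b :: q2 -> a <> b ->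
  (exists m, p2 = p1 ++ a :: m /\ q1 = m ++ b :: q2) \/
  (exists m, p1 = p2 ++ b :: m /\ q2 = m ++ a :: q1).
Proof.
move=> E ab; case: (cat_eq_cat_cons E) => [[m [-> ->]]|[[|c m] [-> [Ec Eq]]]].
- by right; exists m.
- by case: ab.
- by left; exists m; rewrite Ec Eq.
Qed.

Lemma is_min_exists (P : nat -> Prop) k : P k -> exists m, is_min P m.
Proof.
move=> Pk; have [m [[Pm min_m] _]] :=
  dec_inh_nat_subset_has_unique_least_element P (fun j => classic (P j)) (ex_intro P k Pk).
by exists m; split=> // j /min_m /leP.
Qed.

Lemma is_min_ext (P Q : nat -> Prop) m m' :
  (forall k, P k <-> Q k) -> is_min P m -> is_min Q m' -> m = m'.
Proof.
move=> PQ [Pm min_m] [Qm min_m'].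
by apply/eqP; rewrite eqn_leq min_m ?min_m' //; apply/PQ.
Qed.

Lemma seq_choice (Q : nat -> nat -> Prop) N :
  (forall i, i < N -> exists m, Q i m) ->
  exists f : seq nat, size f = N /\ forall i, i < N -> Q i (nth 0 f i).
Proof.
elim: N => [|N IH] H; first by exists [::].
have [f [sf Hf]] := IH (fun i iN => H i (ltnW iN)).
have [m Hm] := H N (ltnSn N).
exists (rcons f m); split=> [|i]; first by rewrite size_rcons sf.
rewrite ltnS leq_eqVlt nth_rcons sf => /orP[/eqP ->|iN]; first by rewrite ltnn eqxx.
by rewrite iN; apply: Hf.
Qed.

Lemma split_at_pair T (f : seq T) k m :
  size f = k + m.+2 -> exists fp fa fb fq,
    [/\ f = fp ++ fa :: fb :: fq, size fp = k & size fq = m].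
Proof.
move=> sf; have sd : size (drop k f) = m.+2 by rewrite size_drop sf addKn.
case E: (drop k f) sd => [|fa [|fb fq]] //= [sq].
exists (take k f), fa, fb, fq; split=> //; first by rewrite -E cat_take_drop.
by rewrite size_take sf; case: ifP => //; lia.
Qed.

Definition swap_index (k i : nat) := if i == k then k.+1 else if i == k.+1 then k else i.

Lemma swap_index_ltn k m i : k.+1 < m -> i < m -> swap_index k i < m.
Proof.
move=> km im; rewrite /swap_index.
by case: eqP => _; [|case: eqP => _; [apply: ltnW|]].
Qed.

Lemma nth_swap_index T (x0 : T) p a b q i :
  nth x0 (p ++ a :: b :: q) (swap_index (size p) i) = nth x0 (p ++ b :: a :: q) i.
Proof.
rewrite /swap_index !nth_cat.
case: (eqVneq i (size p)) => [->|ne1]; first by rewrite ltnn ltnNge leqnSn subnn subSnn.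
case: (eqVneq i (size p).+1) => [->|ne2]; first by rewrite ltnn ltnNge leqnSn subnn subSnn.
case: (ltnP i (size p)) => // ip.
by have [j ->] : exists j, i - size p = j.+2 by exists (i - size p - 2); lia.
Qed.

Lemma linvK n : involutive (@linv n).
Proof. by case=> a b; rewrite /linv /= negbK. Qed.

Section ShuffleEquivalence.

Variables (n : nat) (e : rel 'I_n).
Hypotheses (irr : irreflexive e) (sym : symmetric e).

Definition link (x : letter n) : pred (letter n) := fun l => e x.1 l.1.

Inductive shuffle_eq : word n -> word n -> Prop :=
| sh_refl s : shuffle_eq s s
| sh_sym s t : shuffle_eq s t -> shuffle_eq t s
| sh_trans s t r : shuffle_eq s t -> shuffle_eq t r -> shuffle_eq s r
| sh_swap p q a b : e a.1 b.1 -> shuffle_eq (p ++ a :: b :: q) (p ++ b :: a :: q).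

Lemma shuffle_eq_raag s t : shuffle_eq s t -> raag_eq e s t.
Proof.
elim=> [s'|s' t' _ IH|s' t' r _ IH1 _ IH2|p q a b eab].
- exact: re_refl.
- exact: re_sym.
- exact: re_trans IH2.
- exact: re_comm.
Qed.

Lemma shuffle_eq_catl u s t : shuffle_eq s t -> shuffle_eq (u ++ s) (u ++ t).
Proof.
elim=> [s'|s' t' _ IH|s' t' r _ IH1 _ IH2|p q a b eab].
- exact: sh_refl.
- exact: sh_sym.
- exact: sh_trans IH2.
- by rewrite !catA; apply: sh_swap.
Qed.

Lemma shuffle_eq_cons c s t : shuffle_eq s t -> shuffle_eq (c :: s) (c :: t).
Proof. exact: (shuffle_eq_catl [:: c]). Qed.

Lemma raag_eq_catl u s t : raag_eq e s t -> raag_eq e (u ++ s) (u ++ t).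
Proof.
elim=> [s'|s' t' _ IH|s' t' r _ IH1 _ IH2|p q a|p q a b eab].
- exact: re_refl.
- exact: re_sym.
- exact: re_trans IH2.
- by rewrite !catA; apply: re_free.
- by rewrite !catA; apply: re_comm.
Qed.

Lemma raag_eq_cons c s t : raag_eq e s t -> raag_eq e (c :: s) (c :: t).
Proof. exact: (raag_eq_catl [:: c]). Qed.

Lemma shuffle_eq_move y m z :
  all (link y) m -> shuffle_eq (y :: m ++ z) (m ++ y :: z).
Proof.
elim: m => [|l m IH] /=; first by move=> _; apply: sh_refl.
case/andP=> eyl /IH ym; apply: sh_trans (shuffle_eq_cons l ym).
exact: (sh_swap [::]).
Qed.

Lemma shuffle_eq_commuting_blocks A B Y :
  (forall l, l \in A -> all (link l) B) -> shuffle_eq (A ++ B ++ Y) (B ++ A ++ Y).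
Proof.
elim: A => [|l A IH] H /=; first exact: sh_refl.
apply: (@sh_trans _ (l :: B ++ A ++ Y)).
  by apply/shuffle_eq_cons/IH => l' Al'; apply: H; rewrite inE Al' orbT.
exact/shuffle_eq_move/H/mem_head.
Qed.

Fixpoint absorb (x : letter n) (s : word n) : option (word n) :=
  match s with
  | [::] => None
  | y :: s' => if y == linv x then Some s'
               else if link x y then omap (cons y) (absorb x s') else None
  end.

Definition act (x : letter n) (s : word n) : word n :=
  if absorb x s is Some r then r else x :: s.

Fixpoint reduced (s : word n) : bool :=
  if s is y :: s' then (absorb y s' == None) && reduced s' else true.

Definition nf (w : word n) : word n := foldr act [::] w.

Lemma link_linv_neq x l : link x l -> l != linv x.
Proof. by apply: contraTneq => ->; rewrite /link /= irr. Qed.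

Lemma absorb_cat x p q :
  all (link x) p -> absorb x (p ++ q) = omap (cat p) (absorb x q).
Proof.
elim: p => [|l p IH] /=; first by case: (absorb x q).
case/andP=> xl /IH ->; rewrite (negbTE (link_linv_neq xl)) xl.
by case: (absorb x q).
Qed.

Lemma absorb_cat_linv x p q :
  all (link x) p -> absorb x (p ++ linv x :: q) = Some (p ++ q).
Proof. by move=> xp; rewrite absorb_cat //= eqxx. Qed.

Lemma absorb_Some x s r : absorb x s = Some r ->
  exists p q, [/\ s = p ++ linv x :: q, all (link x) p & r = p ++ q].
Proof.
elim: s r => [|y s IH] r //=.
case: eqP => [-> [<-]|_]; first by exists [::], s.
case xy: (link x y) => //; case H: (absorb x s) => [r'|] //= [<-].
have [p [q [-> xp ->]]] := IH _ H.
by exists (y :: p), q; rewrite /= xy xp.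
Qed.

Lemma absorb_None_link_rem y z p q : link y z ->
  (absorb y (p ++ z :: q) == None) = (absorb y (p ++ q) == None).
Proof.
move=> yz; elim: p => [|l p IH] /=.
  by rewrite (negbTE (link_linv_neq yz)) yz; case: (absorb y q).
case: (l == linv y) (link y l) => [] [] //.
by move: IH; case: (absorb y (p ++ z :: q)); case: (absorb y (p ++ q)).
Qed.

Lemma reducedP s :
  reflect (forall p y q, s = p ++ y :: q -> absorb y q = None) (reduced s).
Proof.
elim: s => [|y s IH] /=; first by apply: ReflectT => -[].
apply: (iffP andP) => [[/eqP ys /IH Hs] [|l p] y' q [Ey E]|H].
- by rewrite -Ey -E.
- exact: Hs E.
split; first by apply/eqP/(H [::]).
by apply/IH => p y' q E; apply: (H (y :: p)); rewrite E.
Qed.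

Definition opt_shuffle_eq (o1 o2 : option (word n)) : Prop :=
  match o1, o2 with
  | None, None => True
  | Some r1, Some r2 => shuffle_eq r1 r2
  | _, _ => False
  end.

Lemma absorb_swap x p q a b : e a.1 b.1 ->
  opt_shuffle_eq (absorb x (p ++ a :: b :: q)) (absorb x (p ++ b :: a :: q)).
Proof.
move=> eab; elim: p => [|y p IH] /=.
  case: (eqVneq a (linv x)) => [Ea|Ha].
    have xb : link x b by move: eab; rewrite Ea.
    by rewrite (negbTE (link_linv_neq xb)) xb; apply: sh_refl.
  case: (eqVneq b (linv x)) => [Eb|Hb].
    have xa : link x a by move: eab; rewrite Eb /link sym.
    by rewrite xa; apply: sh_refl.
  case: (link x a); case: (link x b); case: (absorb x q) => //= r.
  exact: (sh_swap [::]).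
case: (y == linv x) => /=; first exact: sh_swap.
case: (link x y) => //; move: IH.
by case: (absorb x (p ++ a :: b :: q)); case: (absorb x (p ++ b :: a :: q))
  => //= r1 r2; apply: shuffle_eq_cons.
Qed.

Lemma act_shuffle_eq x s t : shuffle_eq s t -> shuffle_eq (act x s) (act x t).
Proof.
elim=> [s'|s' t' _ IH|s' t' r _ IH1 _ IH2|p q a b eab].
- exact: sh_refl.
- exact: sh_sym.
- exact: sh_trans IH2.
- rewrite /act; have := absorb_swap x p q eab.
  case: (absorb x (p ++ a :: b :: q)); case: (absorb x (p ++ b :: a :: q)) => //= _.
  by rewrite -!cat_cons; apply: sh_swap.
Qed.

Lemma foldr_act_shuffle_eq u s t :
  shuffle_eq s t -> shuffle_eq (foldr act s u) (foldr act t u).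
Proof. by elim: u => //= x u IH /IH; apply: act_shuffle_eq. Qed.

Lemma act_reduced x s : reduced s -> reduced (act x s).
Proof.
rewrite /act; case H: (absorb x s) => [r|] Hs; last by rewrite /= H eqxx.
have [p [q [Es xp Er]]] := absorb_Some H; subst s r.
move/reducedP: Hs => Hs; apply/reducedP => p' y q' E.
case: (cat_eq_cat_cons E) => [[m [Ep Eq]]|[m [Ep Eq]]]; subst.
- have yx : link y (linv x).
    by move: xp; rewrite all_cat /= => /and3P[_ + _]; rewrite /link sym.
  apply/eqP; rewrite -(absorb_None_link_rem _ _ yx); apply/eqP.
  by apply: (Hs p'); rewrite -catA.
- by apply: (Hs (p ++ linv x :: m)); rewrite -catA.
Qed.

Lemma nf_reduced w : reduced (nf w).
Proof. by elim: w => //= x w; apply: act_reduced. Qed.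

Lemma nf_id s : reduced s -> nf s = s.
Proof.
elim: s => //= y s IH /andP[/eqP ys /IH Hs].
by rewrite /nf /= -/(nf s) Hs /act ys.
Qed.

Lemma act_linvK x s : reduced s -> shuffle_eq (act x (act (linv x) s)) s.
Proof.
move=> Hs; rewrite {2}/act; case H: (absorb (linv x) s) => [r|]; last first.
  by rewrite /act /= eqxx; apply: sh_refl.
have [p [q [Es xp Er]]] := absorb_Some H; subst s r.
rewrite linvK in Hs *; rewrite /act absorb_cat //.
by move/reducedP: Hs => /(_ p x q erefl) ->; apply: shuffle_eq_move.
Qed.

Lemma act_comm x y s : e x.1 y.1 -> shuffle_eq (act x (act y s)) (act y (act x s)).
Proof.
move=> xy; have yx : link y x by rewrite /link sym.
have absorb_x w : absorb x (y :: w) = omap (cons y) (absorb x w).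
  by rewrite (absorb_cat (p := [:: y])) /= ?andbT.
have absorb_y w : absorb y (x :: w) = omap (cons x) (absorb y w).
  by rewrite (absorb_cat (p := [:: x])) /= ?andbT.
rewrite /act; case Hx: (absorb x s) => [r1|]; case Hy: (absorb y s) => [r2|].
- have [p1 [q1 [Es1 xp1 ->]]] := absorb_Some Hx.
  have [p2 [q2 [Es2 yp2 ->]]] := absorb_Some Hy.
  have ne : linv x <> linv y by move/(can_inj (@linvK n)) => E; move: xy; rewrite /link E irr.
  rewrite Es1 in Es2; case: (cat_cons_eq_cat_cons Es2 ne) => [[m [Ep Eq]]|[m [Ep Eq]]]; subst.
  + move: yp2; rewrite all_cat /= => /and3P[yp1 _ ym].
    rewrite -catA /= absorb_cat_linv // absorb_cat // absorb_cat_linv //=.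
    exact: sh_refl.
  + move: xp1; rewrite all_cat /= => /and3P[xp2 _ xm].
    rewrite absorb_cat // absorb_cat_linv // -catA /= absorb_cat_linv //=.
    exact: sh_refl.
- have [p1 [q1 [Es1 xp1 Er1]]] := absorb_Some Hx; subst s r1.
  rewrite absorb_x Hx /=.
  move/eqP: Hy; rewrite absorb_None_link_rem // => /eqP ->; exact: sh_refl.
- have [p2 [q2 [Es2 yp2 Er2]]] := absorb_Some Hy; subst s r2.
  rewrite absorb_y Hy /=.
  move/eqP: Hx; rewrite absorb_None_link_rem // => /eqP ->; exact: sh_refl.
- by rewrite absorb_x absorb_y Hx Hy /=; apply: (sh_swap [::]).
Qed.

Lemma raag_eq_nf s t : raag_eq e s t -> shuffle_eq (nf s) (nf t).
Proof.
elim=> [s'|s' t' _ IH|s' t' r _ IH1 _ IH2|p q a|p q a b eab].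
- exact: sh_refl.
- exact: sh_sym.
- exact: sh_trans IH2.
- by rewrite /nf !foldr_cat; apply/foldr_act_shuffle_eq/act_linvK/nf_reduced.
- by rewrite /nf !foldr_cat; apply/foldr_act_shuffle_eq/act_comm.
Qed.

Lemma geodesic_reduced s : geodesic e s -> reduced s.
Proof.
move=> Gs; apply/reducedP => p y q Es.
case H: (absorb y q) => [r|] //.
have [m [k [Eq ym _]]] := absorb_Some H; subst q s.
have R : raag_eq e (p ++ y :: m ++ linv y :: k) (p ++ m ++ k).
  apply: (@re_trans _ _ _ ((p ++ m) ++ y :: linv y :: k)).
    by rewrite -catA; apply/raag_eq_catl/shuffle_eq_raag/shuffle_eq_move.
  by rewrite [p ++ m ++ k]catA; apply: re_free.
by have := Gs _ R; rewrite !size_cat /= size_cat /=; lia.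
Qed.

Lemma geodesic_shuffle_eq s t :
  geodesic e s -> geodesic e t -> raag_eq e s t -> shuffle_eq s t.
Proof.
move=> /geodesic_reduced/nf_id Es /geodesic_reduced/nf_id Et /raag_eq_nf.
by rewrite Es Et.
Qed.

End ShuffleEquivalence.

Lemma sigma_cat n M (p q : word n) fp fq : size p = size fp ->
  sigma M (p ++ q) (fp ++ fq) = sigma M p fp ++ sigma M q fq.
Proof. by move=> sp; rewrite /sigma zip_cat // map_cat flatten_cat. Qed.

Lemma mem_pw n (a : 'I_n) z l : l \in pw a z -> l.1 = a.
Proof. by rewrite mem_nseq => /andP[_ /eqP ->]. Qed.

Section RightCountingVector.

Variables (n : nat) (e : rel 'I_n).
Hypothesis sym : symmetric e.

(* The sets minimised in the definition of [rcv]: [rc_cand e s i x0] is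
   [link_split (nth x0 s i) (drop i s)]. *)
Definition link_split (d : letter n) (w : word n) (k : nat) : Prop :=
  exists x y, all (link e d) x /\ size y = k /\ raag_eq e w (x ++ d :: y).

Lemma link_split_raag d w w' k :
  raag_eq e w w' -> link_split d w k -> link_split d w' k.
Proof.
move=> R [x [y [xd [sy R']]]]; exists x, y; split=> //; split=> //.
exact: re_trans (re_sym R) R'.
Qed.

Lemma link_split_swap d c q k :
  e d.1 c.1 -> link_split d (d :: c :: q) k <-> link_split d (d :: q) k.
Proof.
move=> edc; have dc : shuffle_eq e (d :: c :: q) (c :: d :: q) by apply: (sh_swap [::]).
split=> [[x [y [xd [sy R]]]]|[x [y [xd [sy R]]]]].
- exists (linv c :: x), y; split; first by rewrite /= /link edc.
  split=> //; apply: (@re_trans _ _ _ (linv c :: c :: d :: q)).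
    by apply: re_sym; have := @re_free _ e [::] (d :: q) (linv c); rewrite linvK.
  by apply/raag_eq_cons/(re_trans _ R)/re_sym/shuffle_eq_raag.
- exists (c :: x), y; split; first by rewrite /= /link edc.
  by split=> //; apply: re_trans (shuffle_eq_raag dc) (raag_eq_cons _ R).
Qed.

Lemma rc_cand_swap p q a b x0 i k : e a.1 b.1 ->
  rc_cand e (p ++ b :: a :: q) i x0 k <->
  rc_cand e (p ++ a :: b :: q) (swap_index (size p) i) x0 k.
Proof.
move=> eab; rewrite /rc_cand -/(link_split _ _ k) -/(link_split _ _ k).
rewrite -nth_swap_index /swap_index.
case: (ltnP i (size p)) => ip.
  rewrite (ltn_eqF ip) (ltn_eqF (leqW ip)) nth_cat !drop_cat ip.
  by split; apply: link_split_raag; apply: re_comm; rewrite // sym.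
rewrite !nth_cat !drop_cat.
case: (eqVneq i (size p)) => [->|ne1].
  by rewrite ltnn ltnNge leqnSn subnn subSnn /= link_split_swap // sym.
case: (eqVneq i (size p).+1) => [->|ne2].
  by rewrite ltnn ltnNge leqnSn subnn subSnn /= link_split_swap.
rewrite [i < _]ltnNge ip /=.
by have [j ->] : exists j, i - size p = j.+2 by exists (i - size p - 2); lia.
Qed.

Lemma rcv_exists s : exists f, rcv e s f.
Proof.
have /seq_choice[f [sf Hf]] :
    forall i, i < size s -> exists m, forall x0, is_min (rc_cand e s i x0) m.
  move=> i Hi; have [d _] : exists d : letter n, True by case: s Hi => // d; exists d.
  have [m Hm] : exists m, is_min (rc_cand e s i d) m.
    apply: (@is_min_exists _ (size (drop i.+1 s))).
    exists [::], (drop i.+1 s); do 2!split=> //.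
    by rewrite (drop_nth d Hi); apply: re_refl.
  by exists m => x0; rewrite /rc_cand (set_nth_default d x0 Hi).
by exists f; split=> // x0 i /Hf.
Qed.

Lemma rcv_unique s f f' : rcv e s f -> rcv e s f' -> f = f'.
Proof.
move=> [sf Hf] [sf' Hf']; apply: (@eq_from_nth _ 0); first by rewrite sf sf'.
rewrite sf => {sf sf'}; case: s Hf Hf' => // d s' Hf Hf' i Hi.
exact: is_min_ext (Hf d i Hi) (Hf' d i Hi).
Qed.

Lemma rcv_bound s f (x0 : letter n) i :
  rcv e s f -> i < size s -> nth 0 f i <= size s - i.+1.
Proof.
move=> [_ Hf] Hi; have [_ min_f] := Hf x0 i Hi.
rewrite -size_drop; apply: min_f.
exists [::], (drop i.+1 s); do 2!split=> //.
by rewrite (drop_nth x0 Hi); apply: re_refl.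
Qed.

Lemma rcv_swap p q a b fs ft : e a.1 b.1 ->
  rcv e (p ++ a :: b :: q) fs -> rcv e (p ++ b :: a :: q) ft ->
  exists fp fa fb fq,
    [/\ fs = fp ++ fa :: fb :: fq, ft = fp ++ fb :: fa :: fq & size fp = size p].
Proof.
move=> eab [sfs Hs] [sft Ht].
have /split_at_pair[fp [fa [fb [fq [Efs sp sq]]]]] : size fs = size p + (size q).+2.
  by rewrite sfs size_cat.
exists fp, fa, fb, fq; split=> //.
apply: (@eq_from_nth _ 0) => [|i]; first by rewrite sft !size_cat /= sp sq.
rewrite sft => Hi; rewrite -nth_swap_index -Efs sp.
have Hsw : swap_index (size p) i < size (p ++ a :: b :: q).
  apply: swap_index_ltn; last by move: Hi; rewrite !size_cat.
  by rewrite size_cat !addnS !ltnS leq_addr.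
apply: (is_min_ext _ (Ht a i Hi) (Hs a _ Hsw)) => k.
exact: rc_cand_swap.
Qed.

Lemma sigma_swap M p q a b fs ft : e a.1 b.1 ->
  rcv e (p ++ a :: b :: q) fs -> rcv e (p ++ b :: a :: q) ft ->
  raag_eq e (sigma M (p ++ a :: b :: q) fs) (sigma M (p ++ b :: a :: q) ft).
Proof.
move=> eab Hs Ht; have [fp [fa [fb [fq [-> -> sp]]]]] := rcv_swap eab Hs Ht.
rewrite !sigma_cat ?sp //=; apply/raag_eq_catl/shuffle_eq_raag/shuffle_eq_commuting_blocks.
by move=> l /mem_pw la; apply/allP => l' /mem_pw lb; rewrite /link la lb.
Qed.

Lemma sigma_shuffle_eq M s t fs ft : shuffle_eq e s t ->
  rcv e s fs -> rcv e t ft -> raag_eq e (sigma M s fs) (sigma M t ft).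
Proof.
move=> st; elim: st fs ft => [s'|s' t' _ IH|s' t' r _ IH1 _ IH2|p q a b eab] fs ft Hs Ht.
- by rewrite (rcv_unique Hs Ht); apply: re_refl.
- exact/re_sym/IH.
- have [f Hf] := rcv_exists t'.
  exact: re_trans (IH1 _ _ Hs Hf) (IH2 _ _ Hf Ht).
- exact: sigma_swap.
Qed.

End RightCountingVector.

Definition u_index n M (a : 'I_n) (b : bool) (k : nat) : nat :=
  2 * n * (M - 1 - k) + 2 * a + ~~ b.

Lemma u_index_syllable n M (a : 'I_n) b k :
  u n (u_index M a b k) = (nat_of_ord a, Nexp M b k).
Proof.
have n_gt0 : 0 < n by case: n a => [[]|].
have r_lt : 2 * a + ~~ b < 2 * n by have := ltn_ord a; case: b => /=; lia.
rewrite /u /u_index -addnA mulnC.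
rewrite divnMDl ?muln_gt0 // (divn_small r_lt) addn0 modnMDl (modn_small r_lt).
have -> : (2 * a + ~~ b) %/ 2 = a by move: r_lt; case: (b) => /=; lia.
have -> : 2 * (M - 1 - k) + (2 * a + ~~ b) - 2 * a = 2 * (M - 1 - k) + ~~ b by lia.
rewrite exprD exprM sqrrN /Nexp.
by case: (b); rewrite /= ?expr0 ?expr1 mulrC.
Qed.

Lemma u_index_ltn n M (a a' : 'I_n) b b' k k' : k' <= k < M ->
  (k' = k -> a < a') -> u_index M a b k < u_index M a' b' k'.
Proof.
move=> /andP[k'k kM] Hkk'; rewrite /u_index.
have [a_lt a'_lt] := (ltn_ord a, ltn_ord a').
case: (ltnP k' k) => [lt_k'k|ge_k'k].
  have : 2 * n * (M - 1 - k) + 2 * n <= 2 * n * (M - 1 - k').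
    by rewrite -mulnSr leq_mul2l; apply/orP; right; lia.
  by case: b; case: b' => /=; lia.
have Ek : k' = k by apply/eqP; rewrite eqn_leq k'k ge_k'k.
by have := Hkk' Ek; rewrite Ek; case: b; case: b' => /=; lia.
Qed.

Lemma canonical_sylls_sorted n (e : rel 'I_n) M s f :
  size s <= M -> canonical e s f ->
  exists js, sorted ltn js /\ [seq u n j | j <- js] = sylls M s f.
Proof.
move=> sM [rf [f_decr f_tie]]; have [sf _] := rf.
exists [seq u_index M p.1.1 p.1.2 p.2 | p <- zip s f]; split; last first.
  by rewrite /sylls -map_comp; apply: eq_map => -[[a b] k]; apply: u_index_syllable.
apply/(sortedP 0) => i; rewrite size_map size_zip sf minnn => Hi.
have [x0 _] : exists x0 : letter n, True by move: Hi; case: (s) => // x0; exists x0.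
rewrite !(nth_map (x0, 0)) ?size_zip ?sf ?minnn ?(ltnW Hi) // !nth_zip //=.
have ii' : i < i.+1 < size s by rewrite ltnSn Hi.
apply: u_index_ltn => [|E]; last exact: (f_tie x0 i i.+1 ii' (esym E)).1.
rewrite f_decr ?leqnSn //=.
by have := rcv_bound x0 rf (ltnW Hi); lia.
Qed.

Theorem lemma3p3 (n : nat) (e : rel 'I_n) (M : nat) :
  (0 < n)%N -> irreflexive e -> symmetric e -> (0 < M)%N ->
  (* (1) sigma is well defined on B(M) *)
  ((forall s : word n, geodesic e s -> (size s <= M)%N -> exists f, rcv e s f) /\
   (forall (s t : word n) (fs ft : seq nat),
      geodesic e s -> (size s <= M)%N ->
      raag_eq e s t -> size t = size s ->
      rcv e s fs -> rcv e t ft ->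
      raag_eq e (sigma M s fs) (sigma M t ft))) /\
  (* (2) for a canonical expression, the syllables of sigma(w) form a
     subsequence of (u_i) *)
  (forall (s : word n) (f : seq nat),
      geodesic e s -> (size s <= M)%N -> canonical e s f ->
      exists js : seq nat,
        sorted ltn js /\ [seq u n j | j <- js] = sylls M s f).
Proof.
move=> _ irr sym _; split; [split|].
- by move=> s _ _; apply: rcv_exists.
- move=> s t fs ft Gs _ R st; apply: sigma_shuffle_eq => //.
  apply: geodesic_shuffle_eq => // t' R'; rewrite st.
  exact/Gs/(re_trans R R').
- by move=> s f _; apply: canonical_sylls_sorted.
Qed.
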